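(* Let the number of attacked inputs and outputs be bounded by $r$ and $s$, respectively. Under the attack model described in the context, the state of the system can be reconstructed (possibly with bounded delay) from the controller input $u$ and observed output $y$ if and only if the system $(A,B,C,D)$ is $(2r,2s)$-sparse strongly observable.
   Context: Consider the discrete-time LTI system $x(t+1)=Ax(t)+Bu_S(t)$, $y_S(t)=Cx(t)+Du_S(t)$ with $u_S(t)\in\mathbb{R}^m$, $x(t)\in\mathbb{R}^n$, $y_S(t)\in\mathbb{R}^p$, where $\begin{bmatrix}B^T & D^T\end{bmatrix}^T$ has full column rank. Attack model: $u_S(t)=u(t)+w(t)$ and $y(t)=y_S(t)+a(t)$, where $u(t)$ is the controller-designed input, $y(t)$ is the observed output, and $w(t)\in\mathbb{R}^m$, $a(t)\in\mathbb{R}^p$ are arbitrary signals injected by an adversary (no constraints on magnitude, statistics, or timing). The adversary chooses fixed (unknown to the controller) sets $\Gamma_u\subseteq\{1,\dots,m\}$ with $|\Gamma_u|\le r$ and $\overline{\Gamma}_y\subseteq\{1,\dots,p\}$ with $|\overline{\Gamma}_y|\le s$, such that for all $t$ the nonzero components of $w(t)$ lie in $\Gamma_u$ and the nonzero components of $a(t)$ lie in $\overline{\Gamma}_y$. The controller observes only $y(t)$ and knows $u(t)$. An LTI system is strongly observable if for any initial state $x(0)$ and any (unknown) input sequence there exists an integer $\tau$ such that $x(0)$ can be uniquely recovered from $y(0),\dots,y(\tau)$ (equivalently, $y(t)=0$ for all $t$ implies $x(0)=0$). An LTI system $(A,B,C,D)$ with $m$ inputs and $p$ outputs is $(r,s)$-sparse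 strongly observable if for every $\Gamma_u\subseteq\{1,\dots,m\}$ with $|\Gamma_u|\le r$ and every $\Gamma_y\subseteq\{1,\dots,p\}$ with $|\Gamma_y|\ge p-s$, the subsystem $(A, B|_{(\cdot,\Gamma_u)}, C|_{(\Gamma_y,\cdot)}, D|_{(\Gamma_y,\Gamma_u)})$ is strongly observable, where $M|_{(O_1,O_2)}$ denotes the submatrix of $M$ keeping rows indexed by $O_1$ and columns indexed by $O_2$ (a dot meaning all rows/columns). *)

From HB Require Import structures.
From mathcomp Require Import all_boot all_order all_algebra.
From mathcomp Require Import reals.
Set Implicit Arguments. Unset Strict Implicit. Unset Printing Implicit Defensive.
Import Order.TTheory GRing.Theory Num.Theory.
Local Open Scope ring_scope.

Section Defs.
Variable R : realType.

Fixpoint traj (n m : nat) (A : 'M[R]_n) (B : 'M[R]_(n, m)) (x0 : 'cV[R]_n)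
  (v : nat -> 'cV[R]_m) (t : nat) : 'cV[R]_n :=
  match t with
  | 0 => x0
  | t'.+1 => A *m traj A B x0 v t' + B *m v t'
  end.

Definition strongly_observable (n m p : nat) (A : 'M[R]_n) (B : 'M[R]_(n, m))
  (C : 'M[R]_(p, n)) (D : 'M[R]_(p, m)) : Prop :=
  forall (x0 : 'cV[R]_n) (v : nat -> 'cV[R]_m),
    (forall t, C *m traj A B x0 v t + D *m v t = 0) -> x0 = 0.

Definition sparse_strongly_observable (r s : nat) (n m p : nat)
  (A : 'M[R]_n) (B : 'M[R]_(n, m)) (C : 'M[R]_(p, n)) (D : 'M[R]_(p, m)) : Prop :=
  forall (Gu : {set 'I_m}) (Gy : {set 'I_p}),
    (#|Gu| <= r)%N -> (p - s <= #|Gy|)%N ->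
    strongly_observable A
      (colsub (fun k : 'I_#|Gu| => enum_val k) B)
      (rowsub (fun k : 'I_#|Gy| => enum_val k) C)
      (mxsub (fun k : 'I_#|Gy| => enum_val k) (fun k : 'I_#|Gu| => enum_val k) D).

Definition att_state (n m : nat) (A : 'M[R]_n) (B : 'M[R]_(n, m))
  (x0 : 'cV[R]_n) (u w : nat -> 'cV[R]_m) : nat -> 'cV[R]_n :=
  traj A B x0 (fun t => u t + w t).

Definition att_output (n m p : nat) (A : 'M[R]_n) (B : 'M[R]_(n, m))
  (C : 'M[R]_(p, n)) (D : 'M[R]_(p, m)) (x0 : 'cV[R]_n)
  (u w : nat -> 'cV[R]_m) (a : nat -> 'cV[R]_p) (t : nat) : 'cV[R]_p :=
  C *m att_state A B x0 u w t + D *m (u t + w t) + a t.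

Definition admissible_attack (r s m p : nat) (w : nat -> 'cV[R]_m)
  (a : nat -> 'cV[R]_p) : Prop :=
  (exists Gu : {set 'I_m}, (#|Gu| <= r)%N /\
     forall t (i : 'I_m), i \notin Gu -> w t i 0 = 0) /\
  (exists Gyb : {set 'I_p}, (#|Gyb| <= s)%N /\
     forall t (i : 'I_p), i \notin Gyb -> a t i 0 = 0).

Definition state_reconstructible (r s : nat) (n m p : nat) (A : 'M[R]_n)
  (B : 'M[R]_(n, m)) (C : 'M[R]_(p, n)) (D : 'M[R]_(p, m)) : Prop :=
  exists tau : nat,
    forall (u : nat -> 'cV[R]_m) (x0 x0' : 'cV[R]_n)
           (w w' : nat -> 'cV[R]_m) (a a' : nat -> 'cV[R]_p) (t : nat),
      admissible_attack r s w a -> admissible_attack r s w' a' ->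
      (forall k, (k <= t + tau)%N ->
         att_output A B C D x0 u w a k = att_output A B C D x0' u w' a' k) ->
      att_state A B x0 u w t = att_state A B x0' u w' t.

End Defs.

(* Two executions with the same observed output differ by an execution of the
   attack-free system whose input and output perturbations are supported on at
   most 2r inputs and 2s outputs.  Hence, under (2r,2s)-sparse strong
   observability, the state difference is invisible to a strongly observable
   subsystem for n+1 steps and must vanish: the subspaces of states whose output
   can be kept at zero for k steps decrease and stall within n steps, and once
   they stall the output can be kept at zero forever.  Conversely, an initial
   state x hidden from a (2r,2s)-subsystem is split, input-wise and
   output-wise, into an attacked execution from x and one from 0 that produce
   the same observations. *)

From HB Require Import structures.
From mathcomp Require Import all_boot all_order all_algebra.
From mathcomp Require Import reals zify.
From Stdlib Require Import Classical ClassicalEpsilon.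
Import Order.TTheory GRing.Theory Num.Theory.
Local Open Scope ring_scope.
Set Implicit Arguments. Unset Strict Implicit.

Lemma nonincreasing_stalls (f : nat -> nat) N :
  (forall k, f k.+1 <= f k)%N -> (f 0 <= N)%N ->
  exists2 k, (k <= N)%N & f k.+1 = f k.
Proof.
elim: N f => [|N IH] f f_dec f0_le.
  by exists 0%N => //; have := f_dec 0%N; lia.
have [f1_eq|f1_neq] := eqVneq (f 1%N) (f 0%N); first by exists 0%N.
have [|k kN fk] := IH (fun k => f k.+1) (fun k => f_dec k.+1).
  by have := f_dec 0%N; lia.
by exists k.+1.
Qed.

Lemma split_card_leq_add (T : finType) (S : {set T}) r1 r2 :
  (#|S| <= r1 + r2)%N ->
  exists S1 S2 : {set T}, [/\ (#|S1| <= r1)%N, (#|S2| <= r2)%N & S = S1 :|: S2].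
Proof.
move=> cardS.
exists [set x in take r1 (enum S)], [set x in drop r1 (enum S)]; split.
- by rewrite cardsE (leq_trans (card_size _)) // size_take_min geq_minl.
- by rewrite cardsE (leq_trans (card_size _)) // size_drop -cardE leq_subLR.
- by apply/setP => x; rewrite !inE -mem_cat cat_take_drop mem_enum.
Qed.

Section RowSpace.
Variables (F : fieldType) (n : nat) (P : 'rV[F]_n -> Prop).
Hypotheses (P0 : P 0) (P_lin : forall a y z, P y -> P z -> P (a *: y + z)).

Lemma subspace_rowspace : exists M : 'M[F]_n, forall y, P y <-> (y <= M)%MS.
Proof.
have PZ a y : P y -> P (a *: y).
  by move=> Py; rewrite -[_ *: y]addr0; apply: P_lin.
have PD y z : P y -> P z -> P (y + z).
  by move=> Py; rewrite -[y]scale1r; apply: P_lin.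
pose inP (M : 'M[F]_n) := forall y, (y <= M)%MS -> P y.
have inP_adds M y : inP M -> P y -> inP (M + y)%MS.
  move=> PM Py z /sub_addsmxP [[c1 c2] ->]; apply: PD; first exact/PM/submxMl.
  by have /sub_rVP [a ->] := submxMl c2 y; apply: PZ.
suff [M [PM sPM]] : exists M, inP M /\ forall y, P y -> (y <= M)%MS.
  by exists M => y; split=> [/sPM|/PM].
have grow d M : (n - \rank M <= d)%N -> inP M ->
    exists M', inP M' /\ forall y, P y -> (y <= M')%MS.
  elim: d M => [|d IH] M rkM PM.
    exists M; split=> // y _; apply: submx_full.
    by rewrite /row_full eqn_leq rank_leq_col; lia.
  have [sPM|] := classic (forall y, P y -> (y <= M)%MS); first by exists M.
  case/not_all_ex_not => y /(imply_to_and (P y)) [Py yM].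
  apply: (IH (M + y)%MS); last exact: inP_adds.
  have := ltn_leqif (mxrank_leqif_sup (addsmxSl M y)).
  rewrite addsmx_sub submx_refl (introF idP yM) => ltMy; lia.
apply: (grow n 0); first by rewrite leq_subr.
by move=> y; rewrite submx0 => /eqP ->.
Qed.

End RowSpace.

Section Trajectories.
Variables (R : realType) (n m : nat) (A : 'M[R]_n) (B : 'M[R]_(n, m)).

Lemma traj0 t : traj A B 0 (fun=> 0) t = 0.
Proof. by elim: t => [|t IH] //=; rewrite IH !mulmx0 addr0. Qed.

Lemma traj_linear_comb a x y v v' t :
  traj A B (a *: x + y) (fun t => a *: v t + v' t) t =
  a *: traj A B x v t + traj A B y v' t.
Proof.
by elim: t => [|t IH] //=; rewrite IH !mulmxDr -!scalemxAr addrACA -scalerDr.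
Qed.

Lemma trajB x y v v' t :
  traj A B x v t - traj A B y v' t = traj A B (x - y) (fun t => v t - v' t) t.
Proof. by elim: t => [|t IH] //=; rewrite -IH !mulmxBr opprD addrACA. Qed.

Lemma eq_traj x v v' : v =1 v' -> traj A B x v =1 traj A B x v'.
Proof. by move=> eq_v; elim=> [|t IH] //=; rewrite IH eq_v. Qed.

Lemma traj_shift x v t j :
  traj A B x v (t + j) = traj A B (traj A B x v t) (fun j => v (t + j)) j.
Proof. by elim: j => [|j IH] /=; rewrite ?addn0 // addnS /= IH. Qed.

Lemma att_state_sub x0 x0' u w w' t :
  att_state A B x0 u w t - att_state A B x0' u w' t =
  traj A B (x0 - x0') (fun t => w t - w' t) t.
Proof.
rewrite /att_state trajB; apply: eq_traj => k.
by rewrite opprD addrACA subrr add0r.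
Qed.

End Trajectories.

Section Output.
Variables (R : realType) (n m p : nat) (A : 'M[R]_n) (B : 'M[R]_(n, m))
  (C : 'M[R]_(p, n)) (D : 'M[R]_(p, m)).

Definition output x v t := C *m traj A B x v t + D *m v t.

Lemma output_shift x v t j :
  output x v (t + j) = output (traj A B x v t) (fun j => v (t + j)) j.
Proof. by rewrite /output traj_shift. Qed.

Lemma eq_output x v v' : v =1 v' -> output x v =1 output x v'.
Proof. by move=> eq_v t; rewrite /output (eq_traj _ _ _ eq_v) eq_v. Qed.

Definition zero_output_for k x :=
  exists v, forall j, (j < k)%N -> output x v j = 0.

Lemma zero_output_for0 k : zero_output_for k 0.
Proof. by exists (fun=> 0) => j _; rewrite /output traj0 !mulmx0 addr0. Qed.

Lemma zero_output_for_lin k a x y :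
  zero_output_for k x -> zero_output_for k y -> zero_output_for k (a *: x + y).
Proof.
move=> [vx hx] [vy hy]; exists (fun t => a *: vx t + vy t) => j jk.
move: (hx j jk) (hy j jk); rewrite /output traj_linear_comb !mulmxDr.
by rewrite -!scalemxAr addrACA -scalerDr => -> ->; rewrite scaler0 addr0.
Qed.

Lemma zero_output_for_le k k' x :
  (k <= k')%N -> zero_output_for k' x -> zero_output_for k x.
Proof. by move=> le_kk' [v hv]; exists v => j jk; apply/hv/(leq_trans jk). Qed.

Lemma zero_output_forS k x :
  zero_output_for k.+1 x <->
  exists v0, C *m x + D *m v0 = 0 /\ zero_output_for k (A *m x + B *m v0).
Proof.
split=> [[v hv] | [v0 [out0 [v hv]]]].
  exists (v 0%N); split; first exact: (hv 0%N).
  exists (fun j => v j.+1) => j jk.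
  by have := hv j.+1 jk; rewrite -[j.+1]add1n output_shift.
exists (fun j => if j is j'.+1 then v j' else v0) => -[|j] // jk.
by rewrite -[j.+1]add1n output_shift; apply: hv.
Qed.

Lemma zero_output_of_invariant (S : 'cV[R]_n -> Prop) :
  (forall x, S x -> exists v0, C *m x + D *m v0 = 0 /\ S (A *m x + B *m v0)) ->
  forall x, S x -> exists v, forall t, output x v t = 0.
Proof.
move=> S_inv x Sx.
have /choice [g Hg] : forall y, exists v0,
    S y -> C *m y + D *m v0 = 0 /\ S (A *m y + B *m v0).
  move=> y; have [/S_inv [v0 Hv0]|nSy] := classic (S y); last by exists 0.
  by exists v0.
pose z t := iter t (fun y => A *m y + B *m g y) x.
have Sz t : S (z t) by elim: t => [|t IH] //; apply: (Hg _ IH).2.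
have traj_z t : traj A B x (g \o z) t = z t.
  by elim: t => [|t IH] //=; rewrite IH.
by exists (g \o z) => t; rewrite /output traj_z; apply: (Hg _ (Sz t)).1.
Qed.

Lemma strongly_observable_within :
  strongly_observable A B C D -> forall x, zero_output_for n.+1 x -> x = 0.
Proof.
move=> SO.
have /choice [V HV] : forall k, exists M : 'M[R]_n,
    forall y, zero_output_for k y^T <-> (y <= M)%MS.
  move=> k; apply: subspace_rowspace => [|a y z].
    by rewrite trmx0; apply: zero_output_for0.
  by rewrite linearD linearZ; apply: zero_output_for_lin.
have HVc k x : zero_output_for k x <-> (x^T <= V k)%MS by rewrite -HV trmxK.
have V_dec k : (V k.+1 <= V k)%MS.
  apply/row_subP => i; apply/HV/(zero_output_for_le (leqnSn k))/HV.
  exact: row_sub.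
have [k le_kn rk_eq] := nonincreasing_stalls (fun k => mxrankS (V_dec k))
  (rank_leq_col (V 0%N)).
have V_stall : (V k <= V k.+1)%MS.
  by rewrite -(mxrank_leqif_sup (V_dec k)).2 rk_eq.
have V_inv y : zero_output_for k y ->
    exists v0, C *m y + D *m v0 = 0 /\ zero_output_for k (A *m y + B *m v0).
  by move=> /HVc y_in; apply/zero_output_forS/HVc/(submx_trans y_in V_stall).
move=> x /(zero_output_for_le (leqW le_kn))/(zero_output_of_invariant V_inv).
by move=> [v out0]; apply: SO out0.
Qed.

Lemma att_output_sub x0 x0' u w w' a a' k :
  att_output A B C D x0 u w a k - att_output A B C D x0' u w' a' k =
  output (x0 - x0') (fun t => w t - w' t) k + (a k - a' k).
Proof.
rewrite /att_output /output -(att_state_sub _ _ _ _ u).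
have -> : w k - w' k = (u k + w k) - (u k + w' k).
  by rewrite opprD addrACA subrr add0r.
by rewrite !mulmxBr !opprD addrACA [X in X + _ = _]addrACA.
Qed.

End Output.

Local Notation enumv G := (fun i : 'I_#|G| => enum_val i).

Section Support.
Variables (R : pzRingType) (k : nat).
Implicit Types (S T : {set 'I_k}) (v : 'cV[R]_k).

Definition supported S v := forall i, i \notin S -> v i 0 = 0.

Definition mask S v : 'cV[R]_k := \col_i (if i \in S then v i 0 else 0).

Definition zero_ext S (u : 'cV[R]_#|S|) : 'cV[R]_k :=
  \col_j \sum_(i | enum_val i == j) u i 0.

#[global] Arguments zero_ext : clear implicits.

Lemma supportedN S v : supported S v -> supported S (- v).
Proof. by move=> Sv i iS; rewrite mxE Sv ?oppr0. Qed.

Lemma mask_supported S v : supported S (mask S v).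
Proof. by move=> i iS; rewrite mxE (negbTE iS). Qed.

Lemma supported_maskC S T v :
  supported (S :|: T) v -> supported T (mask (~: S) v).
Proof.
move=> STv i iT; rewrite mxE inE; case: ifP => // iS.
by apply: STv; rewrite inE negb_or iS.
Qed.

Lemma mask_addC S v : mask S v + mask (~: S) v = v.
Proof.
by apply/colP => i; rewrite !mxE inE; case: ifP; rewrite ?addr0 ?add0r.
Qed.

Lemma supported_rowsub_eq0 S v : rowsub (enumv S) v = 0 -> supported (~: S) v.
Proof.
move=> v_S0 i; rewrite inE negbK => iS.
have := congr1 (fun M : 'cV_#|S| => M (enum_rank_in iS i) 0) v_S0.
by rewrite !mxE enum_rankK_in.
Qed.

Lemma zero_ext_supported S u : supported S (zero_ext S u).
Proof.
move=> j jS; rewrite mxE big1 // => i /eqP ij.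
by move: jS; rewrite -ij enum_valP.
Qed.

Lemma rowsub_zero_ext S u : rowsub (enumv S) (zero_ext S u) = u.
Proof.
apply/colP => i; rewrite !mxE (bigD1 i) //= big1 ?addr0 // => i'.
by case/andP => /eqP/enum_val_inj ->; rewrite eqxx.
Qed.

Lemma mul_colsub_supported l S (M : 'M[R]_(l, k)) v : supported S v ->
  M *m v = colsub (enumv S) M *m rowsub (enumv S) v.
Proof.
move=> Sv; apply/colP => a; rewrite !mxE (bigID (mem S)) /=.
rewrite [X in _ + X]big1 ?addr0 => [|j /Sv ->]; last by rewrite mulr0.
rewrite (big_enum_val (fun j => M a j * v j 0)).
by apply: eq_bigr => i _; rewrite !mxE.
Qed.

End Support.

Section Subsystem.
Variables (R : realType) (n m p : nat) (A : 'M[R]_n) (B : 'M[R]_(n, m))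
  (C : 'M[R]_(p, n)) (D : 'M[R]_(p, m)).

Lemma traj_colsub (Gu : {set 'I_m}) x d : (forall t, supported Gu (d t)) ->
  traj A B x d =1
  traj A (colsub (enumv Gu) B) x (fun t => rowsub (enumv Gu) (d t)).
Proof.
move=> Gu_d; elim=> [|t IH] //=.
by rewrite IH (mul_colsub_supported _ (Gu_d t)).
Qed.

Lemma output_subsystem (Gu : {set 'I_m}) (Gy : {set 'I_p}) x d :
  (forall t, supported Gu (d t)) -> forall t,
  rowsub (enumv Gy) (output A B C D x d t) =
  output A (colsub (enumv Gu) B) (rowsub (enumv Gy) C)
    (mxsub (enumv Gy) (enumv Gu) D) x (fun t => rowsub (enumv Gu) (d t)) t.
Proof.
move=> Gu_d t; rewrite /output -traj_colsub // [mxsub _ _ D]mxsubcr.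
rewrite -(mul_colsub_supported _ (Gu_d t)) !mul_rowsub_mx.
by apply/colP => i; rewrite !mxE.
Qed.

End Subsystem.

Lemma reconstructible_of_sparse_strongly_observable (R : realType) n m p
  (A : 'M[R]_n) (B : 'M[R]_(n, m)) (C : 'M[R]_(p, n)) (D : 'M[R]_(p, m)) r s :
  sparse_strongly_observable (2 * r) (2 * s) A B C D ->
  state_reconstructible r s A B C D.
Proof.
move=> SSO; exists n => u x0 x0' w w' a a' t.
move=> [[G1 [cG1 G1_w]] [H1 [cH1 H1_a]]] [[G2 [cG2 G2_w']] [H2 [cH2 H2_a']]].
move=> same_out.
pose Gu := G1 :|: G2; pose Gy := ~: (H1 :|: H2).
have cGu : (#|Gu| <= 2 * r)%N.
  by rewrite mul2n -addnn (leq_trans (leq_card_setU _ _).1) ?leq_add.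
have cGy : (p - 2 * s <= #|Gy|)%N.
  have := cardsC (H1 :|: H2); have := (leq_card_setU H1 H2).1.
  by rewrite /Gy card_ord; lia.
have Gu_dw j : supported Gu (w (t + j)%N - w' (t + j)%N).
  move=> i; rewrite inE negb_or => /andP[iG1 iG2].
  by rewrite !mxE G1_w ?G2_w' ?subrr.
apply/eqP; rewrite -subr_eq0 att_state_sub; apply/eqP.
apply: (strongly_observable_within (SSO Gu Gy cGu cGy)).
exists (fun j => rowsub (enumv Gu) (w (t + j)%N - w' (t + j)%N)) => j lt_jn.
rewrite -(output_subsystem _ _ _ _ _ _ Gu_dw) -output_shift.
have /eqP := same_out (t + j)%N (leq_add (leqnn t) (lt_jn : j <= n)%N).
rewrite -subr_eq0 att_output_sub addr_eq0 => /eqP ->.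
apply/colP => i; have := enum_valP i; rewrite !inE negb_or => /andP[iH1 iH2].
by rewrite !mxE H1_a ?H2_a' ?subrr ?oppr0.
Qed.

Lemma sparse_strongly_observable_of_reconstructible (R : realType) n m p
  (A : 'M[R]_n) (B : 'M[R]_(n, m)) (C : 'M[R]_(p, n)) (D : 'M[R]_(p, m)) r s :
  state_reconstructible r s A B C D ->
  sparse_strongly_observable (2 * r) (2 * s) A B C D.
Proof.
move=> [tau rec] Gu Gy cGu cGy x v sub_out0.
have cGu' : (#|Gu| <= r + r)%N by rewrite addnn -mul2n.
have [G1 [G2 [cG1 cG2 GuE]]] := split_card_leq_add cGu'.
have cGyC : (#|~: Gy| <= s + s)%N by have := cardsC Gy; rewrite card_ord; lia.
have [H1 [H2 [cH1 cH2 GyCE]]] := split_card_leq_add cGyC.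
pose d t := zero_ext Gu (v t).
pose z t := output A B C D x d t.
have Gy_z t : supported (~: Gy) (z t).
  apply: supported_rowsub_eq0.
  rewrite (output_subsystem _ _ _ _ _ _ (fun t => zero_ext_supported (v t))).
  rewrite (eq_output _ _ _ _ _ (fun t => rowsub_zero_ext (v t))).
  exact: sub_out0.
(* Split the hidden execution so that w - w' = d and a - a' = - z. *)
pose w t := mask G1 (d t); pose w' t := - mask (~: G1) (d t).
pose a t := - mask H1 (z t); pose a' t := mask (~: H1) (z t).
have adm : admissible_attack r s w a.
  by split; [exists G1 | exists H1]; split=> // t;
    [apply: mask_supported | apply/supportedN/mask_supported].
have adm' : admissible_attack r s w' a'.
  split; [exists G2 | exists H2]; split=> // t.
    apply/supportedN/supported_maskC.
    by rewrite -GuE; apply: zero_ext_supported.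
  by apply: supported_maskC; rewrite -GyCE; apply: Gy_z.
apply: (rec (fun=> 0) x 0 w w' a a' 0%N adm adm') => k _.
apply/eqP; rewrite -subr_eq0 att_output_sub subr0.
rewrite (eq_output _ _ _ _ _ (fun t => (_ : w t - w' t = d t))) => [|t].
  by rewrite -/(z k) /a /a' -opprD mask_addC subrr.
by rewrite /w /w' opprK mask_addC.
Qed.

Theorem theorem1 (R : realType) (n m p : nat) (A : 'M[R]_n) (B : 'M[R]_(n, m))
  (C : 'M[R]_(p, n)) (D : 'M[R]_(p, m)) (r s : nat) :
  \rank (col_mx B D) = m ->
  (state_reconstructible r s A B C D <->
   sparse_strongly_observable (2 * r) (2 * s) A B C D).
Proof.
move=> _; split.
  exact: sparse_strongly_observable_of_reconstructible.
exact: reconstructible_of_sparse_strongly_observable.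
Qed.
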